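(* Let $d\geq1$, $p\in[1,\infty)\setminus\{2\}$, and $\lambda_1,\dots,\lambda_d>0$. Define $g:(0,\infty)\to(0,\infty)$ by $$g(\beta)=\left(\frac{\sum_{i=1}^{d}\frac{1}{1+\beta^{1/p}\lambda_i}}{\sum_{i=1}^{d}\frac{\lambda_i}{1+\beta^{1/p}\lambda_i}}\right)^{\frac{p}{3p-1}}.$$ Then $g$ has a unique fixed point $\beta^*_{\mathrm{vol}}>0$, and for every initial value $\beta_0>0$ the iterates $\beta_{n+1}=g(\beta_n)$, $n=0,1,2,\dots$, satisfy $\lim_{n\to\infty}\beta_n=\beta^*_{\mathrm{vol}}$. *)

From Stdlib Require Import Reals Lra.
Open Scope R_scope.

Fixpoint sumR (d : nat) (f : nat -> R) : R :=
  match d with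
  | O => 0
  | S k => sumR k f + f k
  end.

Definition g_vol (d : nat) (p : R) (lam : nat -> R) (beta : R) : R :=
  Rpower
    (sumR d (fun i => 1 / (1 + Rpower beta (1 / p) * lam i)) /
     sumR d (fun i => lam i / (1 + Rpower beta (1 / p) * lam i)))
    (p / (3 * p - 1)).

Fixpoint g_iter (d : nat) (p : R) (lam : nat -> R) (beta0 : R) (n : nat) : R :=
  match n with
  | O => beta0
  | S m => g_vol d p lam (g_iter d p lam beta0 m)
  end.

(* In logarithmic coordinates t = ln beta the iteration becomes
   t |-> F t = p/(3p-1) * (a (t/p) - b (t/p)), where
   a u = ln (sum_i 1/(1 + e^u lam_i)) and b u = ln (sum_i lam_i/(1 + e^u lam_i)).
   Both a and b are nonincreasing while u + a u and u + b u are nondecreasing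
   (each s/(1 + s lam) increases with s), so a - b is 1-Lipschitz and F is a
   contraction of R with constant 1/(3p-1) <= 1/2.  The contraction principle on R
   gives the unique fixed point and global convergence. *)

From Stdlib Require Import Reals Lra Lia Psatz.
Open Scope R_scope.

Lemma ln_le x y : 0 < x -> x <= y -> ln x <= ln y.
Proof.
  intros Hx [Hlt | ->]; [now left; apply ln_increasing | apply Rle_refl].
Qed.

Lemma sumR_le d f g :
  (forall i, (i < d)%nat -> f i <= g i) -> sumR d f <= sumR d g.
Proof.
  induction d as [|d IH]; simpl; intros H; [lra|].
  apply Rplus_le_compat; auto.
Qed.

Lemma sumR_ge0 d f : (forall i, (i < d)%nat -> 0 <= f i) -> 0 <= sumR d f.
Proof.
  induction d as [|d IH]; simpl; intros H; [lra|].
  assert (0 <= sumR d f) by (apply IH; auto).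
  assert (0 <= f d) by auto.
  lra.
Qed.

Lemma sumR_gt0 d f :
  (1 <= d)%nat -> (forall i, (i < d)%nat -> 0 < f i) -> 0 < sumR d f.
Proof.
  destruct d as [|d]; simpl; intros Hd H; [lia|].
  assert (0 <= sumR d f) by (apply sumR_ge0; intros; left; auto).
  assert (0 < f d) by auto.
  lra.
Qed.

Lemma sumR_scal_l d s f : s * sumR d f = sumR d (fun i => s * f i).
Proof. induction d as [|d IH]; simpl; [ring | rewrite <- IH; ring]. Qed.

Lemma Rdiv_le_cross a b c e : 0 < b -> 0 < e -> a * e <= c * b -> a / b <= c / e.
Proof.
  intros Hb He H.
  apply (Rmult_le_reg_r (b * e)); [nra|].
  replace (a / b * (b * e)) with (a * e) by (field; lra).
  replace (c / e * (b * e)) with (c * b) by (field; lra).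
  exact H.
Qed.

Lemma shifted_inverse_antitone c l s1 s2 :
  0 <= c -> 0 <= l -> 0 <= s1 <= s2 -> c / (1 + s2 * l) <= c / (1 + s1 * l).
Proof.
  intros Hc Hl [Hs1 Hs12].
  apply Rdiv_le_cross; [nra | nra | apply Rmult_le_compat_l; nra].
Qed.

Lemma scaled_shifted_inverse_monotone c l s1 s2 :
  0 <= c -> 0 <= l -> 0 <= s1 <= s2 ->
  s1 * (c / (1 + s1 * l)) <= s2 * (c / (1 + s2 * l)).
Proof.
  intros Hc Hl [Hs1 Hs12].
  assert (E : forall s, 0 <= s -> s * (c / (1 + s * l)) = s * c / (1 + s * l))
    by (intros s Hs0; field; nra).
  rewrite !E by lra; apply Rdiv_le_cross; [nra | nra |].
  enough (0 <= s2 * c * (1 + s1 * l) - s1 * c * (1 + s2 * l)) by lra.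
  replace (s2 * c * (1 + s1 * l) - s1 * c * (1 + s2 * l)) with (c * (s2 - s1)) by ring.
  nra.
Qed.

Definition resolvent_sum (d : nat) (c lam : nat -> R) (s : R) : R :=
  sumR d (fun i => c i / (1 + s * lam i)).

Definition log_resolvent_sum (d : nat) (c lam : nat -> R) (u : R) : R :=
  ln (resolvent_sum d c lam (exp u)).

Definition antitone_1lip (phi : R -> R) : Prop :=
  forall u v, u <= v -> phi u - (v - u) <= phi v <= phi u.

Section ResolventSum.
Variables (d : nat) (c lam : nat -> R).
Hypothesis lam_ge0 : forall i, (i < d)%nat -> 0 <= lam i.

Lemma resolvent_sum_gt0 s :
  (1 <= d)%nat -> (forall i, (i < d)%nat -> 0 < c i) -> 0 <= s ->
  0 < resolvent_sum d c lam s.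
Proof.
  intros Hd Hc Hs; apply sumR_gt0; [exact Hd|].
  intros i Hi; pose proof (lam_ge0 i Hi); apply Rdiv_lt_0_compat; [auto | nra].
Qed.

Hypothesis c_ge0 : forall i, (i < d)%nat -> 0 <= c i.

Lemma resolvent_sum_antitone s1 s2 :
  0 <= s1 <= s2 -> resolvent_sum d c lam s2 <= resolvent_sum d c lam s1.
Proof.
  intros Hs; apply sumR_le; intros i Hi.
  apply shifted_inverse_antitone; auto.
Qed.

Lemma scaled_resolvent_sum_monotone s1 s2 :
  0 <= s1 <= s2 -> s1 * resolvent_sum d c lam s1 <= s2 * resolvent_sum d c lam s2.
Proof.
  intros Hs; unfold resolvent_sum; rewrite !sumR_scal_l; apply sumR_le; intros i Hi.
  apply scaled_shifted_inverse_monotone; auto.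
Qed.

Lemma log_resolvent_sum_antitone_1lip :
  (1 <= d)%nat -> (forall i, (i < d)%nat -> 0 < c i) ->
  antitone_1lip (log_resolvent_sum d c lam).
Proof.
  intros Hd Hc u v Huv; unfold log_resolvent_sum.
  assert (Hexp : 0 <= exp u <= exp v).
  { split; [left; apply exp_pos|].
    destruct Huv as [Hlt | ->]; [left; apply exp_increasing, Hlt | apply Rle_refl]. }
  pose proof (resolvent_sum_gt0 (exp u) Hd Hc ltac:(lra)) as Su.
  pose proof (resolvent_sum_gt0 (exp v) Hd Hc ltac:(lra)) as Sv.
  split.
  - pose proof (ln_le _ _ (Rmult_lt_0_compat _ _ (exp_pos u) Su)
                  (scaled_resolvent_sum_monotone _ _ Hexp)) as H.
    rewrite !ln_mult, !ln_exp in H by (apply exp_pos || assumption).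
    lra.
  - apply ln_le; [exact Sv | apply resolvent_sum_antitone, Hexp].
Qed.

End ResolventSum.

Lemma antitone_1lip_sub phi psi :
  antitone_1lip phi -> antitone_1lip psi ->
  forall u v, Rabs ((phi u - psi u) - (phi v - psi v)) <= Rabs (u - v).
Proof.
  intros Hphi Hpsi.
  assert (K : forall u v, u <= v ->
            Rabs ((phi u - psi u) - (phi v - psi v)) <= Rabs (u - v)).
  { intros u v Huv; specialize (Hphi u v Huv); specialize (Hpsi u v Huv).
    rewrite (Rabs_left1 (u - v)) by lra; apply Rabs_le; lra. }
  intros u v; destruct (Rle_or_lt u v) as [Huv | Hvu]; [auto|].
  rewrite Rabs_minus_sym, (Rabs_minus_sym u); apply K; lra.
Qed.

Definition lipschitz (k : R) (F : R -> R) : Prop :=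
  forall x y, Rabs (F x - F y) <= k * Rabs (x - y).

Section Contraction.
Variables (k : R) (F : R -> R).
Hypothesis k_ge0 : 0 <= k.
Hypothesis k_lt1 : k < 1.
Hypothesis F_lip : lipschitz k F.

Lemma lipschitz_continuity : continuity F.
Proof.
  intros x eps Heps; exists (eps / (k + 1)); split; [apply Rdiv_lt_0_compat; lra|].
  intros y [_ Hy]; simpl in *; unfold R_dist in *.
  apply (Rle_lt_trans _ (k * Rabs (y - x))); [apply F_lip|].
  apply (Rle_lt_trans _ ((k + 1) * Rabs (y - x))); [pose proof (Rabs_pos (y - x)); nra|].
  apply (Rmult_lt_compat_l (k + 1)) in Hy; [|lra].
  replace ((k + 1) * (eps / (k + 1))) with eps in Hy by (field; lra).
  exact Hy.
Qed.

Lemma contraction_fixpoint_unique x y : F x = x -> F y = y -> x = y.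
Proof.
  intros Hx Hy; pose proof (F_lip x y) as H; rewrite Hx, Hy in H.
  assert (Rabs (x - y) = 0) by (pose proof (Rabs_pos (x - y)); nra).
  destruct (Req_dec (x - y) 0) as [E | E]; [lra | now apply Rabs_no_R0 in E].
Qed.

Lemma contraction_fixpoint_exists : exists t, F t = t.
Proof.
  set (M := Rabs (F 0) / (1 - k) + 1).
  assert (HM : M = Rabs (F 0) + k * M + (1 - k)) by (unfold M; field; lra).
  assert (M_pos : 0 < M) by (pose proof (Rabs_pos (F 0)); nra).
  assert (Hbound : forall x, Rabs (F x) <= Rabs (F 0) + k * Rabs x).
  { intros x; pose proof (F_lip x 0) as H; rewrite Rminus_0_r in H.
    pose proof (Rabs_triang_inv (F x) (F 0)); lra. }
  set (h := (id - F)%F).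
  assert (Hh : continuity h)
    by (apply continuity_minus;
        [apply derivable_continuous, derivable_id | exact lipschitz_continuity]).
  assert (Hlo : h (- M) < 0).
  { unfold h, minus_fct, id; pose proof (Hbound (- M)) as B.
    rewrite Rabs_Ropp, (Rabs_pos_eq M) in B by lra.
    pose proof (Rle_abs (- F (- M))); rewrite Rabs_Ropp in *; lra. }
  assert (Hhi : 0 < h M).
  { unfold h, minus_fct, id; pose proof (Hbound M) as B.
    rewrite (Rabs_pos_eq M) in B by lra.
    pose proof (Rle_abs (F M)); lra. }
  destruct (IVT h (- M) M Hh ltac:(lra) Hlo Hhi) as [t [_ Ht]].
  exists t; unfold h, minus_fct, id in Ht; lra.
Qed.

Lemma contraction_iter_dist t x n :
  F t = t -> Rabs (Nat.iter n F x - t) <= k ^ n * Rabs (x - t).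
Proof.
  intros Ht; induction n as [|n IH]; simpl; [lra|].
  rewrite <- Ht at 1; eapply Rle_trans; [apply F_lip|].
  rewrite Rmult_assoc; apply Rmult_le_compat_l; assumption.
Qed.

Lemma contraction_iter_cv t x : F t = t -> Un_cv (fun n => Nat.iter n F x) t.
Proof.
  intros Ht eps Heps; set (D := Rabs (x - t)).
  assert (HD : 0 <= D) by apply Rabs_pos.
  destruct (pow_lt_1_zero k ltac:(rewrite Rabs_pos_eq; lra) (eps / (D + 1)))
    as [N HN]; [apply Rdiv_lt_0_compat; lra|].
  exists N; intros n Hn; unfold R_dist.
  specialize (HN n Hn); rewrite Rabs_pos_eq in HN by (apply pow_le; lra).
  pose proof (pow_le k n k_ge0).
  apply (Rle_lt_trans _ (k ^ n * (D + 1))).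
  - pose proof (contraction_iter_dist t x n Ht) as Hdist; fold D in Hdist; nra.
  - apply (Rmult_lt_compat_r (D + 1)) in HN; [|lra].
    replace (eps / (D + 1) * (D + 1)) with eps in HN by (field; lra).
    exact HN.
Qed.

End Contraction.

Definition log_g_vol (d : nat) (p : R) (lam : nat -> R) (t : R) : R :=
  ln (g_vol d p lam (exp t)).

Lemma g_vol_gt0 d p lam b : 0 < g_vol d p lam b.
Proof. unfold g_vol, Rpower; apply exp_pos. Qed.

Lemma g_vol_log_conj d p lam b :
  0 < b -> g_vol d p lam b = exp (log_g_vol d p lam (ln b)).
Proof. intros Hb; unfold log_g_vol; rewrite exp_ln, exp_ln; auto using g_vol_gt0. Qed.

Lemma g_iter_log_conj d p lam b n :
  0 < b -> g_iter d p lam b n = exp (Nat.iter n (log_g_vol d p lam) (ln b)).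
Proof.
  intros Hb; induction n as [|n IH]; simpl; [now rewrite exp_ln|].
  rewrite IH; unfold log_g_vol; now rewrite exp_ln by apply g_vol_gt0.
Qed.

Section LogGVol.
Variables (d : nat) (p : R) (lam : nat -> R).
Hypothesis d_ge1 : (1 <= d)%nat.
Hypothesis lam_gt0 : forall i, (i < d)%nat -> 0 < lam i.

Let LA := log_resolvent_sum d (fun _ => 1) lam.
Let LB := log_resolvent_sum d lam lam.

Let lam_ge0 : forall i, (i < d)%nat -> 0 <= lam i.
Proof. intros i Hi; left; auto. Qed.

Let LA_antitone_1lip : antitone_1lip LA.
Proof. apply log_resolvent_sum_antitone_1lip; auto; intros; lra. Qed.

Let LB_antitone_1lip : antitone_1lip LB.
Proof. apply log_resolvent_sum_antitone_1lip; auto. Qed.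

Lemma log_g_vol_eq t : log_g_vol d p lam t = p / (3 * p - 1) * (LA (t / p) - LB (t / p)).
Proof.
  assert (Hpow : Rpower (exp t) (1 / p) = exp (t / p))
    by (unfold Rpower; rewrite ln_exp; f_equal; unfold Rdiv; ring).
  set (A := resolvent_sum d (fun _ => 1) lam (exp (t / p))).
  set (B := resolvent_sum d lam lam (exp (t / p))).
  assert (HA : 0 < A)
    by (apply resolvent_sum_gt0; auto; [intros; lra | left; apply exp_pos]).
  assert (HB : 0 < B) by (apply resolvent_sum_gt0; auto; left; apply exp_pos).
  unfold log_g_vol, g_vol, LA, LB, log_resolvent_sum; rewrite Hpow, ln_Rpower.
  change (p / (3 * p - 1) * ln (A * / B) = p / (3 * p - 1) * (ln A - ln B)).
  rewrite ln_mult, ln_Rinv by auto using Rinv_0_lt_compat.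
  ring.
Qed.

Lemma log_g_vol_lipschitz : 1 / 3 < p -> lipschitz (/ (3 * p - 1)) (log_g_vol d p lam).
Proof.
  intros Hp x y; rewrite !log_g_vol_eq.
  pose proof (antitone_1lip_sub LA LB LA_antitone_1lip LB_antitone_1lip (x / p) (y / p)) as H.
  rewrite <- Rmult_minus_distr_l, Rabs_mult, Rabs_pos_eq
    by (apply Rlt_le, Rdiv_lt_0_compat; lra).
  replace (x / p - y / p) with (/ p * (x - y)) in H by (field; lra).
  rewrite Rabs_mult, (Rabs_pos_eq (/ p)) in H by (apply Rlt_le, Rinv_0_lt_compat; lra).
  apply (Rle_trans _ (p / (3 * p - 1) * (/ p * Rabs (x - y)))).
  - apply Rmult_le_compat_l; [apply Rlt_le, Rdiv_lt_0_compat|]; lra.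
  - right; field; lra.
Qed.

End LogGVol.

Theorem theorem3 (d : nat) (p : R) (lam : nat -> R) :
  (1 <= d)%nat -> 1 <= p -> p <> 2 ->
  (forall i, (i < d)%nat -> 0 < lam i) ->
  exists beta_star : R,
    0 < beta_star /\ g_vol d p lam beta_star = beta_star /\
    (forall b, 0 < b -> g_vol d p lam b = b -> b = beta_star) /\
    (forall beta0, 0 < beta0 -> Un_cv (g_iter d p lam beta0) beta_star).
Proof.
  intros Hd Hp _ Hlam.
  set (F := log_g_vol d p lam).
  assert (Hk0 : 0 <= / (3 * p - 1)) by (apply Rlt_le, Rinv_0_lt_compat; lra).
  assert (Hk1 : / (3 * p - 1) < 1) by (rewrite <- Rinv_1; apply Rinv_1_lt_contravar; lra).
  pose proof (log_g_vol_lipschitz d p lam Hd Hlam ltac:(lra)) as HF.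
  destruct (contraction_fixpoint_exists _ F Hk0 Hk1 HF) as [t Ht].
  exists (exp t); split; [apply exp_pos|]; split; [|split].
  - rewrite g_vol_log_conj, ln_exp by apply exp_pos; fold F; now rewrite Ht.
  - intros b Hb Hfix.
    assert (HFb : F (ln b) = ln b)
      by (rewrite <- (ln_exp (F (ln b))); unfold F; rewrite <- g_vol_log_conj, Hfix; auto).
    now rewrite <- (exp_ln b), (contraction_fixpoint_unique _ F Hk1 HF _ _ HFb Ht).
  - intros b0 Hb0.
    apply (Un_cv_ext (fun n => exp (Nat.iter n F (ln b0))));
      [intros n; symmetry; now apply g_iter_log_conj|].
    apply continuity_seq; [apply derivable_continuous_pt, derivable_pt_exp|].
    exact (contraction_iter_cv _ F Hk0 Hk1 HF t (ln b0) Ht).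
Qed.
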